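(* Let $d\in\mathbb{N}$, $0<A\le1$, and let $f$ be a measurable function on $[0,1]^d$. Then $$\|f\|^{(1)}_{2,A}\le\|f\|_{2,A}\le4\,\|f\|^{(1)}_{2,A},$$ where $\|f\|^{(1)}_{2,A}=\sup_{0<t<1}\frac{f^*(t)}{\sqrt{A\log(1/t)+1}}$ and $\|f\|_{2,A}=\inf\{\lambda>0:\int_{[0,1]^d}\Phi_{2,A}(|f(x)|/\lambda)\,dx\le1\}$.
   Context: $\Phi_{2,A}(u)=u^2$ for $0\le u\le1$ and $\Phi_{2,A}(u)=\exp\big((u^2-1)/A\big)$ for $u>1$. $f^*(t)=\inf\{s\ge0:|\{x\in[0,1]^d:|f(x)|>s\}|\le t\}$ is the non-increasing rearrangement of $f$ with respect to Lebesgue measure. *)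

From HB Require Import structures.
From mathcomp Require Import all_boot all_order all_algebra.
From mathcomp Require Import all_classical all_reals all_analysis.
Set Implicit Arguments. Unset Strict Implicit. Unset Printing Implicit Defensive.
Import Order.TTheory GRing.Theory Num.Theory.
Local Open Scope classical_set_scope.
Local Open Scope ring_scope.

(* Points of R^n are n.-tuples of reals, with the product (= Borel) sigma-algebra. *)

Definition unit_cube (R : realType) (n : nat) : set (n.-tuple R) :=
  [set x | forall i : 'I_n, 0 <= tnth x i <= 1].
Arguments unit_cube : clear implicits.

(* mu is n-dimensional Lebesgue measure: it gives every closed box its volume.
   (This determines mu uniquely on the Borel sets of R^n.) *)
Definition is_lebesgue_measure_n (R : realType) (n : nat)
    (mu : {measure set (n.-tuple R) -> \bar R}) : Prop :=
  forall a b : n.-tuple R, (forall i, tnth a i <= tnth b i) ->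
    mu [set x | forall i : 'I_n, tnth a i <= tnth x i <= tnth b i]
    = (\prod_(i < n) (tnth b i - tnth a i))%:E.

Definition Phi2A (R : realType) (A u : R) : R :=
  if u <= 1 then u ^+ 2 else expR ((u ^+ 2 - 1) / A).

Definition distrib (R : realType) (n : nat)
    (mu : {measure set (n.-tuple R) -> \bar R}) (f : n.-tuple R -> R) (s : R)
    : \bar R :=
  mu (unit_cube R n `&` [set x | s < `|f x|]).

Definition rearr (R : realType) (n : nat)
    (mu : {measure set (n.-tuple R) -> \bar R}) (f : n.-tuple R -> R) (t : R)
    : \bar R :=
  ereal_inf [set s%:E | s in [set s : R | 0 <= s /\ (distrib mu f s <= t%:E)%E]].

Definition norm1 (R : realType) (n : nat)
    (mu : {measure set (n.-tuple R) -> \bar R}) (A : R) (f : n.-tuple R -> R)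
    : \bar R :=
  ereal_sup [set (rearr mu f t * ((Num.sqrt (A * ln (t^-1) + 1))^-1)%:E)%E
            | t in [set t : R | 0 < t < 1]].

Definition luxnorm (R : realType) (n : nat)
    (mu : {measure set (n.-tuple R) -> \bar R}) (A : R) (f : n.-tuple R -> R)
    : \bar R :=
  ereal_inf [set l%:E | l in [set l : R | 0 < l /\
     (\int[mu]_(x in unit_cube R n) (Phi2A A (`|f x| / l))%:E <= 1)%E]].

From HB Require Import structures.
From mathcomp Require Import all_boot all_order all_algebra.
From mathcomp Require Import all_classical all_reals all_analysis.
From mathcomp Require Import ring lra.
Set Implicit Arguments. Unset Strict Implicit. Unset Printing Implicit Defensive.
Import measurable_realfun.
Import Order.TTheory GRing.Theory Num.Theory.
Local Open Scope classical_set_scope.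
Local Open Scope ring_scope.

(* The lower bound is Chebyshev's inequality: [Phi2A A (gauge A t) = 1/t], so
   [\int Phi2A A (|f|/l) <= 1] forces [|{|f| > l * gauge A t}| <= t], that is
   [f^*(t) <= l * gauge A t].  Read backwards, [norm1 f < M] gives the Gaussian
   tail [|{|f| > s M}| <= exp (-(s^2 - 1)/A)] for [s > 1].  Cutting the range of
   [|f|/M] at [-1, 1, 2, 3, ...] bounds [Phi2A A (|f|/(4M))] by a series of
   weighted indicators of level sets; when [A <= 1] the tail bound makes the
   integrals of its terms at most [1/16, 3/16, 1/4, 1/8, ...], of sum [3/4]. *)

Section Phi2A_theory.
Variables (R : realType) (A : R).
Hypothesis A_gt0 : 0 < A.

Lemma Phi2A_ge0 u : 0 <= Phi2A A u.
Proof. by rewrite /Phi2A; case: ifP => _; [exact: sqr_ge0 | exact: expR_ge0]. Qed.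

Lemma Phi2A_le u v : 0 <= u -> u <= v -> Phi2A A u <= Phi2A A v.
Proof.
move=> u0 uv; have v0 := le_trans u0 uv; rewrite /Phi2A.
case: ifPn => u1; case: ifPn => v1.
- by rewrite ler_sqr.
- have v2_gt1 : 1 < v ^+ 2 by rewrite -ltNge in v1; rewrite expr_gt1.
  apply: le_trans (expR_ge1Dx _); apply: (@le_trans _ _ 1); first by rewrite expr_le1.
  by rewrite lerDl divr_ge0 ?subr_ge0 ?ltW.
- by rewrite (le_trans uv v1) in u1.
- by rewrite ler_expR ler_pM2r ?invr_gt0 // lerD2r ler_sqr.
Qed.

Lemma measurable_Phi2A : measurable_fun [set: R] (Phi2A A).
Proof.
apply: measurable_fun_if => //.
- apply: (measurable_fun_bool true); rewrite setTI.
  have -> : (fun u : R => u <= 1) @^-1` [set true] = `]-oo, 1]%classic.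
    by apply/seteqP; split => x /=; rewrite in_itv.
  exact: measurable_itv.
- apply: measurable_funTS; apply: measurableT_comp => //.
  by apply: measurable_funM => //; apply: measurable_funB => //; exact: exprn_measurable.
Qed.

Lemma Phi2A_le1DexpR v : 0 <= v -> Phi2A A v <= 1 + expR ((v ^+ 2 - 1) / A).
Proof.
move=> v0; rewrite /Phi2A; case: ifPn => [v1|_]; last by rewrite lerDr.
by rewrite (@le_trans _ _ 1) ?lerDl ?expR_ge0 // expr_le1.
Qed.

Definition gauge (t : R) := Num.sqrt (A * ln t^-1 + 1).

Lemma gauge_gt1 t : 0 < t < 1 -> 1 < gauge t.
Proof.
case/andP=> t0 t1; have lnt : 0 < ln t^-1 by rewrite ln_gt0 // invf_gt1.
have Alnt : 0 < A * ln t^-1 := mulr_gt0 A_gt0 lnt.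
by rewrite /gauge -[X in X < _]sqrtr1 ltr_sqrt ?ltrDr // ltr_wpDl ?ltW.
Qed.

Lemma Phi2A_gauge t : 0 < t < 1 -> Phi2A A (gauge t) = t^-1.
Proof.
move=> t01; have g1 := gauge_gt1 t01; case/andP: t01 => t0 t1.
have lnt : 0 < ln t^-1 by rewrite ln_gt0 // invf_gt1.
rewrite /Phi2A leNgt g1 /= sqr_sqrtr ?addr_ge0 ?mulr_ge0 ?ltW //.
by rewrite addrK mulrC mulKf ?gt_eqF // lnK // posrE invr_gt0.
Qed.

Lemma gauge_expR s : 0 < s -> gauge (expR (- (s ^+ 2 - 1) / A)) = s.
Proof.
move=> s0; rewrite /gauge -expRN expRK mulNr opprK mulrC divfK ?gt_eqF //.
by rewrite subrK sqrtr_sqr gtr0_norm.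
Qed.

End Phi2A_theory.

Lemma exists_nat_bracket (R : archiRealFieldType) (u : R) :
  0 < u -> exists k : nat, k%:R < u <= k.+1%:R.
Proof.
move=> u0; have ex_ub : exists N : nat, u <= N%:R by exists (Num.trunc u).+1; exact/ltW/truncnS_gt.
case: (ex_minnP ex_ub) => [[|k] uk k_min]; first by rewrite leNgt u0 in uk.
by exists k; rewrite uk andbT ltNge; apply/negP => /k_min; rewrite ltnn.
Qed.

Lemma expRN1_le_half (R : realType) : expR (-1) <= 2^-1 :> R.
Proof.
rewrite expRN lef_pV2 ?posrE ?expR_gt0 //.
by apply: le_trans (expR_ge1Dx 1); rewrite lerD2r.
Qed.

Lemma expR_Ndiv_le (R : realType) (A Y : R) :
  0 < A -> A <= 1 -> 0 <= Y -> expR (- Y / A) <= expR (- Y).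
Proof.
move=> A0 A1 Y0; rewrite ler_expR mulNr lerN2 ler_pdivlMr //.
by rewrite ler_piMr.
Qed.

Section layers.
Variables (R : realType) (A : R).
Hypotheses (A_gt0 : 0 < A) (A_le1 : A <= 1).

(* [u |-> Phi2A A (u / 4)] is at most [1/16] on [[0, 1]], [1/4] on [(1, 2]] and
   [Phi2A A ((k + 3) / 4)] on [(k + 2, k + 3]]; the level [-1] is always passed. *)
Definition layer_level (k : nat) : R :=
  match k with 0 => -1 | 1 => 1 | k.+2 => k.+2%:R end.

Definition layer_weight (k : nat) : R :=
  match k with 0 => 16^-1 | 1 => 3 / 16 | k.+2 => Phi2A A (k.+3%:R / 4) end.

Definition layer_bound (k : nat) : R :=
  match k with 0 => 16^-1 | 1 => 3 / 16 | k.+2 => 2^-1 ^+ k.+2 end.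

Lemma layer_weight_ge0 k : 0 <= layer_weight k.
Proof. by case: k => [|[|k]]; rewrite /= ?Phi2A_ge0 //; lra. Qed.

Lemma Phi2A_quarter_le_layers u : 0 <= u ->
  exists N, Phi2A A (u / 4) <= \sum_(0 <= k < N) layer_weight k * (layer_level k < u)%R%:R.
Proof.
move=> u0; case: (leP u 2) => [u_le2|u_gt2].
  exists 2%N; rewrite big_nat_recr //= big_nat1 /= (lt_le_trans _ u0) ?ltrN10 //.
  have -> : Phi2A A (u / 4) = (u / 4) ^+ 2 by rewrite /Phi2A ifT // ler_pdivrMr; lra.
  by case: ltrP => u1 /=; nra.
have [k /andP[ku uk]] : exists k : nat, k%:R < u - 2 <= k.+1%:R.
  by apply: exists_nat_bracket; rewrite subr_gt0.
exists k.+3; rewrite big_nat_recr //= (_ : k.+2%:R < u); last by rewrite -!natr1; lra.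
rewrite mulr1 ler_wpDl ?sumr_ge0 // => [i _|]; first by rewrite mulr_ge0 ?layer_weight_ge0.
by apply: Phi2A_le; rewrite ?divr_ge0 // ler_pM2r // -!natr1; lra.
Qed.

Lemma layer_weight_tail_le j :
  Phi2A A (j.+3%:R / 4) * expR (- (j.+2%:R ^+ 2 - 1) / A) <= layer_bound j.+2.
Proof.
have j0 : 0 <= j%:R :> R by [].
have tail_le Y : j.+3%:R <= Y -> expR (- Y / A) <= 2^-1 ^+ j.+3.
  move=> jY; have Y0 : 0 <= Y by apply: le_trans jY.
  apply: le_trans (expR_Ndiv_le A_gt0 A_le1 Y0) _.
  apply: (@le_trans _ _ (expR (- j.+3%:R))); first by rewrite ler_expR lerN2.
  by rewrite -mulrN1 expRM_natl lerXn2r ?nnegrE ?expR_ge0 ?expRN1_le_half.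
have v0 : 0 <= j.+3%:R / 4 :> R by rewrite divr_ge0.
apply: le_trans (ler_wpM2r (expR_ge0 _) (Phi2A_le1DexpR A v0)) _.
rewrite mulrDl mul1r -expRD /=.
have -> : ((j.+3%:R / 4) ^+ 2 - 1) / A + - (j.+2%:R ^+ 2 - 1) / A
    = - (j.+2%:R ^+ 2 - (j.+3%:R / 4) ^+ 2) / A by ring.
have e2 : j.+2%:R = j%:R + 2 :> R by rewrite -natrD addn2.
have e3 : j.+3%:R = j%:R + 3 :> R by rewrite -natrD addn3.
have Y1 : j.+3%:R <= j.+2%:R ^+ 2 - 1 :> R by rewrite e2 e3; nra.
have Y2 : j.+3%:R <= j.+2%:R ^+ 2 - (j.+3%:R / 4) ^+ 2 :> R.
  by rewrite e2 e3; nra.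
have := tail_le _ Y1; have := tail_le _ Y2; rewrite [2^-1 ^+ j.+3]exprS; lra.
Qed.

Lemma layer_bound_ge0 k : 0 <= layer_bound k.
Proof. by case: k => [|[|k]]; rewrite /= ?exprn_ge0 //; lra. Qed.

Lemma sum_layer_bound N :
  \sum_(0 <= k < N.+2) layer_bound k = 3 / 4 - 2^-1 ^+ N.+1.
Proof.
elim: N => [|N IH]; first by rewrite big_nat_recr //= big_nat1 /=; lra.
by rewrite big_nat_recr //= IH [2^-1 ^+ N.+2]exprS; lra.
Qed.

Lemma sum_layer_bound_le N : \sum_(0 <= k < N) layer_bound k <= 3 / 4.
Proof.
case: N => [|[|N]]; first by rewrite big_geq //; lra.
  by rewrite big_nat1 /=; lra.
by rewrite sum_layer_bound gerBl exprn_ge0.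
Qed.

Lemma layer_bound_series_le :
  (\sum_(0 <= k <oo) (layer_bound k)%:E <= (3 / 4)%:E)%E.
Proof.
apply: lime_le; first by apply: is_cvg_nneseries => k _ _; rewrite lee_fin layer_bound_ge0.
by apply: nearW => N; rewrite sumEFin lee_fin sum_layer_bound_le.
Qed.

End layers.

Lemma measurable_unit_cube (R : realType) n : measurable (unit_cube R n).
Proof.
have -> : unit_cube R n =
    \bigcap_(i in [set: 'I_n]) ([set: n.-tuple R] `&` (fun x : n.-tuple R => tnth x i) @^-1` `[0, 1]).
  by apply/seteqP; split => x /= h i; [split=> //; rewrite /= in_itv; exact: h|
                                       have [_] := h i I; rewrite /= in_itv].
apply: fin_bigcap_measurable; first exact: finite_finset.
by move=> i _; exact: measurable_tnth.
Qed.

Lemma lebesgue_unit_cube (R : realType) n (mu : {measure set (n.-tuple R) -> \bar R}) :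
  is_lebesgue_measure_n mu -> mu (unit_cube R n) = 1%E.
Proof.
move=> /(_ [tuple 0 | _ < n] [tuple 1 | _ < n]).
rewrite (_ : [set x | _] = unit_cube R n); last first.
  by apply/seteqP; split => x /= h i; have := h i; rewrite !tnth_mktuple.
by rewrite big1 => [|i _]; [apply=> i | ]; rewrite !tnth_mktuple ?ler01 ?subr0.
Qed.

Lemma mul_measure_le_integral d (T : measurableType d) (R : realType)
    (mu : {measure set T -> \bar R}) (D E : set T) (h : T -> R) (c : R) :
  measurable D -> measurable E -> E `<=` D -> measurable_fun D h ->
  (forall x, D x -> 0 <= h x) -> 0 <= c -> (forall x, E x -> c <= h x) ->
  (c%:E * mu E <= \int[mu]_(x in D) (h x)%:E)%E.
Proof.
move=> mD mE ED mh h0 c0 ch; rewrite -integral_cst //.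
apply: (@le_trans _ _ (\int[mu]_(x in E) (h x)%:E)%E).
  apply: ge0_le_integral => //=.
  by apply/measurable_EFinP; exact: measurable_funS mh.
by apply: ge0_subset_integral => //; exact/measurable_EFinP.
Qed.

Section rearrangement_vs_luxemburg.
Variables (R : realType) (n : nat) (mu : {measure set (n.-tuple R) -> \bar R}).
Variables (A : R) (f : n.-tuple R -> R).
Hypotheses (mu_cube : mu (unit_cube R n) = 1%E) (A_gt0 : 0 < A)
  (mf : measurable_fun (unit_cube R n) f).

Local Notation C := (unit_cube R n).
Local Notation superlevel s := (C `&` [set x | s < `|f x|]).

Lemma measurable_superlevel s : measurable (superlevel s).
Proof.
have mfn : measurable_fun C (fun x => `|f x|) := measurableT_comp (@normr_measurable R _) mf.
have := mfn (@measurable_unit_cube R n) _ (measurable_itv `]s, +oo[).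
by congr measurable; apply/seteqP; split => x [Cx]; rewrite /= in_itv /= andbT.
Qed.

Lemma distrib_le1 s : (distrib mu f s <= 1)%E.
Proof.
rewrite -mu_cube; apply: le_measure; rewrite ?inE; last exact: subIsetl.
- exact: measurable_superlevel.
- exact: measurable_unit_cube.
Qed.

Lemma le_distrib s1 s2 : s1 <= s2 -> (distrib mu f s2 <= distrib mu f s1)%E.
Proof.
move=> s12; apply: le_measure; rewrite ?inE; try exact: measurable_superlevel.
by move=> x [Cx /= fx]; split => //=; apply: le_lt_trans fx.
Qed.

Lemma measurable_Phi2A_scaled l : measurable_fun C (fun x => (Phi2A A (`|f x| / l))%:E).
Proof.
apply/measurable_EFinP; apply: measurableT_comp; first exact: measurable_Phi2A.
by apply: measurable_funM => //; exact: measurableT_comp.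
Qed.

Lemma distrib_gauge_le t l : 0 < t < 1 -> 0 < l ->
  (\int[mu]_(x in C) (Phi2A A (`|f x| / l))%:E <= 1)%E ->
  (distrib mu f (l * gauge A t) <= t%:E)%E.
Proof.
move=> t01 l0 int_le1; have g1 := gauge_gt1 A_gt0 t01.
have t0 : 0 < t by case/andP: t01.
suff : ((t^-1)%:E * distrib mu f (l * gauge A t) <= 1)%E.
  by rewrite -lee_pdivlMl ?invr_gt0 // invrK mule1.
apply: le_trans int_le1; apply: mul_measure_le_integral.
- exact: measurable_unit_cube.
- exact: measurable_superlevel.
- exact: subIsetl.
- by apply/measurable_EFinP; exact: measurable_Phi2A_scaled.
- by move=> x _; exact: Phi2A_ge0.
- by rewrite invr_ge0 ltW.
move=> x [_ /= fx]; rewrite -(Phi2A_gauge A_gt0 t01).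
by apply: Phi2A_le; rewrite ?(le_trans ler01) ?ltW // ltr_pdivlMr // mulrC.
Qed.

Lemma rearr_le t s : 0 <= s -> (distrib mu f s <= t%:E)%E -> (rearr mu f t <= s%:E)%E.
Proof. by move=> s0 st; apply: ereal_inf_le; exists s%:E => //; exists s. Qed.

Lemma rearr_ge0 t : (0 <= rearr mu f t)%E.
Proof. by apply: le_ereal_inf_tmp => _ [s [s0 _] <-]; rewrite lee_fin. Qed.

Lemma norm1_le_luxnorm : (norm1 mu A f <= luxnorm mu A f)%E.
Proof.
apply: ge_ereal_sup => _ [t t01 <-]; apply: le_ereal_inf_tmp => _ [l [l0 int_le1] <-].
have g0 : 0 < gauge A t := lt_trans ltr01 (gauge_gt1 A_gt0 t01).
have := rearr_le (mulr_ge0 (ltW l0) (ltW g0)) (distrib_gauge_le t01 l0 int_le1).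
move=> /(lee_wpmul2r (_ : 0 <= (gauge A t)^-1%:E)%E).
by rewrite -EFinM mulfK ?gt_eqF //; apply; rewrite lee_fin invr_ge0 ltW.
Qed.

Lemma norm1_ge0 : (0 <= norm1 mu A f)%E.
Proof.
apply: le_trans (ereal_sup_ubound _); last by exists 2^-1 => //; apply/andP; split; lra.
by rewrite mule_ge0 ?rearr_ge0 // lee_fin invr_ge0 sqrtr_ge0.
Qed.

(* Evaluate the supremum defining [norm1] at the [t] with [gauge A t = s]. *)
Lemma distrib_tail M s : 0 < M -> (norm1 mu A f < M%:E)%E -> 1 < s ->
  (distrib mu f (s * M) <= (expR (- (s ^+ 2 - 1) / A))%:E)%E.
Proof.
move=> M0 norm1_lt s1; have s0 : 0 < s := lt_trans ltr01 s1.
set t := expR _; have gt : gauge A t = s by exact: gauge_expR.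
have t01 : 0 < t < 1.
  by rewrite expR_gt0 /= -expR0 ltr_expR mulNr oppr_lt0 divr_gt0 // subr_gt0 expr_gt1 ?ltW.
have : (rearr mu f t * (gauge A t)^-1%:E < M%:E)%E.
  by apply: le_lt_trans norm1_lt; apply: ereal_sup_ubound; exists t.
rewrite gt -lte_pdivlMr ?invr_gt0 // invrK -EFinM => /ereal_inf_lt[_ [r [r0 rt] <-]].
by rewrite lte_fin => rsM; apply: le_trans rt; apply: le_distrib; rewrite mulrC ltW.
Qed.

Lemma Phi2A_le_layer_series x M : C x -> 0 < M ->
  ((Phi2A A (`|f x| / (4 * M)))%:E <=
    \sum_(0 <= k <oo) (layer_weight A k * \1_(superlevel (layer_level R k * M)) x)%:E)%E.
Proof.
move=> Cx M0; have u0 : 0 <= `|f x| / M := divr_ge0 (normr_ge0 _) (ltW M0).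
have [N Phi_le] := Phi2A_quarter_le_layers A_gt0 u0.
apply: le_trans (nneseries_lim_ge N _); last first.
  by move=> k _ _; rewrite lee_fin mulr_ge0 ?layer_weight_ge0 ?indicE.
rewrite sumEFin lee_fin invfM mulrA mulrAC; apply: le_trans Phi_le _.
apply: ler_sum => k _; rewrite indicE in_setI (mem_set Cx) /= ltr_pdivlMr //.
by rewrite /in_mem /= /in_set asboolb.
Qed.

Hypothesis A_le1 : A <= 1.

Lemma layer_integral_le k M : 0 < M -> (norm1 mu A f < M%:E)%E ->
  (\int[mu]_(x in C) (layer_weight A k * \1_(superlevel (layer_level R k * M)) x)%:E
    <= (layer_bound R k)%:E)%E.
Proof.
move=> M0 norm1_lt; have mC := @measurable_unit_cube R n.
rewrite (integralZl_indic mC (fun _ => superlevel _)); last 2 first.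
- by move=> w_lt0; have := layer_weight_ge0 A k; rewrite leNgt w_lt0.
- exact: measurable_superlevel.
rewrite integral_indic //; last exact: measurable_superlevel.
rewrite setIAC setIid.
case: k => [|[|j]] /=.
- by rewrite -[X in (_ <= X)%E]mule1 lee_wpmul2l ?distrib_le1 // lee_fin; lra.
- by rewrite -[X in (_ <= X)%E]mule1 lee_wpmul2l ?distrib_le1 // lee_fin; lra.
have j1 : 1 < j.+2%:R :> R by rewrite ltr1n.
apply: le_trans (lee_wpmul2l _ (distrib_tail M0 norm1_lt j1)) _.
  by rewrite lee_fin Phi2A_ge0.
by rewrite -EFinM lee_fin layer_weight_tail_le.
Qed.

Lemma luxnorm_le M : 0 < M -> (norm1 mu A f < M%:E)%E ->
  (luxnorm mu A f <= (4 * M)%:E)%E.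
Proof.
move=> M0 norm1_lt; apply: ereal_inf_le; exists (4 * M)%:E => //.
exists (4 * M) => //; split; first by rewrite mulr_gt0.
have mC := @measurable_unit_cube R n.
pose g k x := (layer_weight A k * \1_(superlevel (layer_level R k * M)) x)%:E.
have g0 k x : (0 <= g k x)%E by rewrite lee_fin mulr_ge0 ?layer_weight_ge0.
have mg k : measurable_fun C (g k).
  apply/measurable_EFinP; apply: measurable_funM => //; apply: measurable_indic.
  exact: measurable_superlevel.
apply: (@le_trans _ _ (\int[mu]_(x in C) \sum_(0 <= k <oo) g k x)%E).
  apply: ge0_le_integral => //.
  - by move=> x _; rewrite lee_fin Phi2A_ge0.
  - exact: measurable_Phi2A_scaled.
  - exact: (@ge0_emeasurable_sum _ _ _ _ g xpredT (fun k x _ _ => g0 k x)).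
  - by move=> x Cx; exact: Phi2A_le_layer_series.
rewrite integral_nneseries //.
apply: le_trans (lee_nneseries _ (fun k _ => layer_integral_le k M0 norm1_lt)) _.
  by move=> k _ _; apply: integral_ge0 => x _; exact: g0.
by apply: le_trans (layer_bound_series_le R) _; rewrite lee_fin; lra.
Qed.

End rearrangement_vs_luxemburg.

Lemma lee_pmul_of_gt (R : realType) (c : R) (x y : \bar R) : 0 < c -> (0 <= y)%E ->
  (forall M, 0 < M -> (y < M%:E)%E -> (x <= (c * M)%:E)%E) -> (x <= c%:E * y)%E.
Proof.
move=> c0; case: y => [r| |] //= r0 x_le; last by rewrite gt0_muley ?leey.
apply/lee_addgt0Pr => e e0; rewrite -EFinM -EFinD.
have -> : c * r + e = c * (r + e / c) by rewrite mulrDr mulrCA divff ?gt_eqF ?mulr1.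
apply: x_le; last by rewrite lte_fin ltrDl divr_gt0.
by rewrite ltr_pwDr ?divr_gt0.
Qed.

Theorem theorem4p9 (R : realType) (n : nat)
    (mu : {measure set (n.-tuple R) -> \bar R})
    (A : R) (f : n.-tuple R -> R) :
  is_lebesgue_measure_n mu ->
  0 < A -> A <= 1 ->
  measurable_fun (unit_cube R n) f ->
  (norm1 mu A f <= luxnorm mu A f /\ luxnorm mu A f <= 4%:E * norm1 mu A f)%E.
Proof.
move=> /lebesgue_unit_cube mu_cube A_gt0 A_le1 mf; split.
  exact: norm1_le_luxnorm.
apply: lee_pmul_of_gt => //; first exact: norm1_ge0.
by move=> M M0; exact: luxnorm_le.
Qed.
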